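(* Let $A\bowtie^{\theta} I$ be an amalgamated Banach algebra as in the context. Then $A\bowtie^{\theta} I$ is Arens regular if and only if all of the following hold: $A$ is Arens regular; $I$ is Arens regular; and for every $F\in\theta^{**}(A^{**})$ and every $G\in I^{**}$ one has $F\Box G=F\Diamond G$ and $G\Box F=G\Diamond F$ (products in $B^{**}$), i.e. $\theta(A)$ and $I$ act regularly on each other.
   Context: Let $A$ and $B$ be Banach algebras, $\theta:A\to B$ a continuous algebra homomorphism with $\|\theta\|\le 1$, and $I$ a closed two-sided ideal of $B$. The amalgamated Banach algebra $A\bowtie^{\theta} I$ is the Banach space $\{(a,i): a\in A,\ i\in I\}$ with norm $\|(a,i)\|=\|a\|+\|i\|$ and product $(a,i)\cdot(a',i')=(aa',\ \theta(a)i'+i\theta(a')+ii')$. Arens products: for a Banach algebra $C$, $a,b\in C$, $f\in C^*$, $F,G\in C^{**}$, define $\langle a\cdot f,b\rangle=\langle f,ba\rangle$, $\langle f\cdot a,b\rangle=\langle f,ab\rangle$, $\langle f\cdot F,a\rangle=\langle F,a\cdot f\rangle$, $\langle F\cdot f,a\rangle=\langle F,f\cdot a\rangle$, $\langle F\Box G,f\rangle=\langle F,G\cdot f\rangle$, $\langle F\Diamond G,f\rangle=\langle G,f\cdot F\rangle$. $C$ is Arens regular if $F\Box G=F\Diamond G$ for all $F,G\in C^{**}$. $I^{**}$ is identified with the weak$^*$-closure of $I$ in $B^{**}$ and $\theta^{**}:A^{**}\to B^{**}$ is the second adjoint of $\theta$. *)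

From Stdlib Require Import Reals.
Open Scope R_scope.
Set Implicit Arguments.

Section Convergence.
Variables (X : Type) (add : X -> X -> X) (opp : X -> X) (norm : X -> R).

Definition cauchy_seq (u : nat -> X) : Prop :=
  forall eps, 0 < eps -> exists N, forall m n, (N <= m)%nat -> (N <= n)%nat ->
    norm (add (u m) (opp (u n))) < eps.

Definition converges_to (u : nat -> X) (l : X) : Prop :=
  forall eps, 0 < eps -> exists N, forall n, (N <= n)%nat ->
    norm (add (u n) (opp l)) < eps.
End Convergence.

Record BanachAlg := {
  ba_car :> Type;
  ba_zero : ba_car;
  ba_add : ba_car -> ba_car -> ba_car;
  ba_opp : ba_car -> ba_car;
  ba_scal : R -> ba_car -> ba_car;
  ba_mul : ba_car -> ba_car -> ba_car;
  ba_norm : ba_car -> R;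
  ba_addA : forall x y z, ba_add x (ba_add y z) = ba_add (ba_add x y) z;
  ba_addC : forall x y, ba_add x y = ba_add y x;
  ba_add0 : forall x, ba_add x ba_zero = x;
  ba_addN : forall x, ba_add x (ba_opp x) = ba_zero;
  ba_scal1 : forall x, ba_scal 1 x = x;
  ba_scalA : forall c d x, ba_scal c (ba_scal d x) = ba_scal (c * d) x;
  ba_scalDr : forall c x y, ba_scal c (ba_add x y) = ba_add (ba_scal c x) (ba_scal c y);
  ba_scalDl : forall c d x, ba_scal (c + d) x = ba_add (ba_scal c x) (ba_scal d x);
  ba_norm_ge0 : forall x, 0 <= ba_norm x;
  ba_norm_eq0 : forall x, ba_norm x = 0 -> x = ba_zero;
  ba_normZ : forall c x, ba_norm (ba_scal c x) = Rabs c * ba_norm x;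
  ba_normD : forall x y, ba_norm (ba_add x y) <= ba_norm x + ba_norm y;
  ba_complete : forall u, cauchy_seq ba_add ba_opp ba_norm u ->
    exists l, converges_to ba_add ba_opp ba_norm u l;
  ba_mulA : forall x y z, ba_mul x (ba_mul y z) = ba_mul (ba_mul x y) z;
  ba_mulDl : forall x y z, ba_mul (ba_add x y) z = ba_add (ba_mul x z) (ba_mul y z);
  ba_mulDr : forall x y z, ba_mul x (ba_add y z) = ba_add (ba_mul x y) (ba_mul x z);
  ba_mulZl : forall c x y, ba_mul (ba_scal c x) y = ba_scal c (ba_mul x y);
  ba_mulZr : forall c x y, ba_mul x (ba_scal c y) = ba_scal c (ba_mul x y);
  ba_normM : forall x y, ba_norm (ba_mul x y) <= ba_norm x * ba_norm y
}.

Section Arens.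
Variables (X : Type) (add : X -> X -> X) (scal : R -> X -> X) (norm : X -> R)
          (mul : X -> X -> X).

Definition bounded_by (f : X -> R) (K : R) : Prop :=
  forall x, Rabs (f x) <= K * norm x.

Definition is_dual (f : X -> R) : Prop :=
  (forall x y, f (add x y) = f x + f y) /\
  (forall c x, f (scal c x) = c * f x) /\
  (exists K, bounded_by f K).

Definition is_bidual (F : (X -> R) -> R) : Prop :=
  (forall f g, is_dual f -> is_dual g -> F (fun x => f x + g x) = F f + F g) /\
  (forall c f, is_dual f -> F (fun x => c * f x) = c * F f) /\
  (exists M, forall f K, is_dual f -> 0 <= K -> bounded_by f K ->
     Rabs (F f) <= M * K).

Definition lact_fun (a : X) (f : X -> R) : X -> R := fun b => f (mul b a).
Definition ract_fun (f : X -> R) (a : X) : X -> R := fun b => f (mul a b).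
Definition ract_bid (f : X -> R) (F : (X -> R) -> R) : X -> R :=
  fun a => F (lact_fun a f).
Definition lact_bid (F : (X -> R) -> R) (f : X -> R) : X -> R :=
  fun a => F (ract_fun f a).

Definition arens_box (F G : (X -> R) -> R) : (X -> R) -> R :=
  fun f => F (lact_bid G f).
Definition arens_diamond (F G : (X -> R) -> R) : (X -> R) -> R :=
  fun f => G (ract_bid f F).

(* equality in X^** : equality of values on X^* *)
Definition bidual_eq (F G : (X -> R) -> R) : Prop :=
  forall f, is_dual f -> F f = G f.

Definition arens_regular : Prop :=
  forall F G, is_bidual F -> is_bidual G ->
    bidual_eq (arens_box F G) (arens_diamond F G).
End Arens.

Definition ba_arens_regular (A : BanachAlg) : Prop :=
  arens_regular (@ba_add A) (@ba_scal A) (@ba_norm A) (@ba_mul A).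

Definition second_adjoint (X Y : Type) (T : X -> Y) (F : (X -> R) -> R)
  : (Y -> R) -> R := fun g => F (fun x => g (T x)).

Record closed_ideal (B : BanachAlg) := {
  ci_mem : B -> Prop;
  ci_zero : ci_mem (ba_zero B);
  ci_add : forall x y, ci_mem x -> ci_mem y -> ci_mem (ba_add B x y);
  ci_opp : forall x, ci_mem x -> ci_mem (ba_opp B x);
  ci_scal : forall c x, ci_mem x -> ci_mem (ba_scal B c x);
  ci_mull : forall b x, ci_mem x -> ci_mem (ba_mul B b x);
  ci_mulr : forall x b, ci_mem x -> ci_mem (ba_mul B x b);
  ci_closed : forall u l, (forall n, ci_mem (u n)) ->
    converges_to (ba_add B) (ba_opp B) (ba_norm B) u l -> ci_mem l
}.

Section Ideal.
Variables (B : BanachAlg) (I : closed_ideal B).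

Definition ideal_car : Type := { b : B | ci_mem I b }.

Definition ideal_add (x y : ideal_car) : ideal_car :=
  exist _ (ba_add B (proj1_sig x) (proj1_sig y))
        (ci_add I _ _ (proj2_sig x) (proj2_sig y)).
Definition ideal_scal (c : R) (x : ideal_car) : ideal_car :=
  exist _ (ba_scal B c (proj1_sig x)) (ci_scal I c _ (proj2_sig x)).
Definition ideal_mul (x y : ideal_car) : ideal_car :=
  exist _ (ba_mul B (proj1_sig x) (proj1_sig y))
        (ci_mull I (proj1_sig x) _ (proj2_sig y)).
Definition ideal_norm (x : ideal_car) : R := ba_norm B (proj1_sig x).

Definition ideal_incl (x : ideal_car) : B := proj1_sig x.

Definition ideal_arens_regular : Prop :=
  arens_regular ideal_add ideal_scal ideal_norm ideal_mul.

Variables (A : BanachAlg) (theta : A -> B).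

(* A bowtie^theta I : pairs (a,i) with ||(a,i)|| = ||a|| + ||i|| and
   (a,i).(a',i') = (aa', theta(a)i' + i theta(a') + ii') *)
Definition amalg_car : Type := (ba_car A * ideal_car)%type.

Definition amalg_add (x y : amalg_car) : amalg_car :=
  (ba_add A (fst x) (fst y), ideal_add (snd x) (snd y)).
Definition amalg_scal (c : R) (x : amalg_car) : amalg_car :=
  (ba_scal A c (fst x), ideal_scal c (snd x)).
Definition amalg_norm (x : amalg_car) : R :=
  ba_norm A (fst x) + ideal_norm (snd x).

Definition amalg_mul_snd (x y : amalg_car) : ideal_car :=
  let a := fst x in let i := snd x in let a' := fst y in let i' := snd y in
  ideal_add
    (ideal_add
       (exist _ (ba_mul B (theta a) (proj1_sig i'))
              (ci_mull I (theta a) _ (proj2_sig i')))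
       (exist _ (ba_mul B (proj1_sig i) (theta a'))
              (ci_mulr I _ (theta a') (proj2_sig i))))
    (ideal_mul i i').

Definition amalg_mul (x y : amalg_car) : amalg_car :=
  (ba_mul A (fst x) (fst y), amalg_mul_snd x y).

Definition amalg_arens_regular : Prop :=
  arens_regular amalg_add amalg_scal amalg_norm amalg_mul.
End Ideal.

From Stdlib Require Import Reals Lra Psatz FunctionalExtensionality ProofIrrelevance
  ClassicalEpsilon Classical.
From mathcomp Require boolp classical_sets.
Open Scope R_scope.
Set Implicit Arguments.

(* Since (a, i) = (a, 0) + (0, i), every element of the bidual of A ⋈ I splits as
   F = ι₁**(fst** F) + ι₂**(snd** F), and both Arens products split bilinearly into
   four terms.  The products (a,0)(a',0) = (aa',0), (a,0)(0,i) = (0,θ(a)i),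
   (0,i)(a,0) = (0,iθ(a)) and (0,i)(0,i') = (0,ii') identify these terms with the
   Arens products of A, of θ**A** with I**, of I** with θ**A** and of I, so the
   amalgam is regular exactly when the four pieces are.  Functionals on I enter
   through functionals on B, which requires the Hahn–Banach theorem (from Zorn's
   lemma). *)

Section VectorSpace.
Context {B : BanachAlg}.
Local Notation "x +_ y" := (ba_add B x y) (at level 50, left associativity).
Local Notation "c *_ x" := (ba_scal B c x) (at level 40, no associativity).
Local Notation zero := (ba_zero B).

Lemma ba_add0l x : zero +_ x = x.
Proof. rewrite ba_addC; apply ba_add0. Qed.

Lemma ba_addIl x y w : x +_ y = x +_ w -> y = w.
Proof.
  intro E.
  assert (E' : ba_opp B x +_ (x +_ y) = ba_opp B x +_ (x +_ w)) by (rewrite E; auto).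
  rewrite !ba_addA, (ba_addC _ (ba_opp B x)), ba_addN, !ba_add0l in E'. exact E'.
Qed.

Lemma ba_scal0l x : 0 *_ x = zero.
Proof.
  apply (ba_addIl (0 *_ x)). rewrite ba_add0, <- ba_scalDl, Rplus_0_r. reflexivity.
Qed.

Lemma ba_scal0r c : c *_ zero = zero.
Proof. rewrite <- (ba_scal0l zero), ba_scalA, Rmult_0_r. reflexivity. Qed.

Lemma ba_norm_zero : ba_norm B zero = 0.
Proof. rewrite <- (ba_scal0l zero), ba_normZ, Rabs_R0. ring. Qed.

Lemma ba_add_scalN1 x : x +_ (-1) *_ x = zero.
Proof.
  rewrite <- (ba_scal1 B x) at 1. rewrite <- ba_scalDl.
  replace (1 + -1) with 0 by ring. apply ba_scal0l.
Qed.

Lemma ba_addACA a b c d : (a +_ b) +_ (c +_ d) = (a +_ c) +_ (b +_ d).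
Proof.
  rewrite !ba_addA. f_equal. rewrite <- !ba_addA. f_equal. apply ba_addC.
Qed.

Lemma ba_mul0l x : ba_mul B zero x = zero.
Proof. rewrite <- (ba_scal0l zero) at 1. rewrite ba_mulZl. apply ba_scal0l. Qed.

Lemma ba_mul0r x : ba_mul B x zero = zero.
Proof. rewrite <- (ba_scal0l zero) at 1. rewrite ba_mulZr. apply ba_scal0l. Qed.

Lemma ba_norm_scalN1 x : ba_norm B ((-1) *_ x) = ba_norm B x.
Proof. rewrite ba_normZ. replace (Rabs (-1)) with 1 by (rewrite Rabs_left; lra). ring. Qed.
End VectorSpace.

Section HahnBanach.
Variables (B : BanachAlg) (p : B -> R) (S : B -> Prop) (f : B -> R).
Local Notation "x +_ y" := (ba_add B x y) (at level 50, left associativity).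
Local Notation "c *_ x" := (ba_scal B c x) (at level 40, no associativity).
Local Notation zero := (ba_zero B).

Hypotheses
  (p_add : forall x y, p (x +_ y) <= p x + p y)
  (p_scal : forall c x, 0 <= c -> p (c *_ x) = c * p x)
  (S_zero : S zero)
  (S_add : forall x y, S x -> S y -> S (x +_ y))
  (S_scal : forall c x, S x -> S (c *_ x))
  (f_add : forall x y, S x -> S y -> f (x +_ y) = f x + f y)
  (f_scal : forall c x, S x -> f (c *_ x) = c * f x)
  (f_le : forall x, S x -> f x <= p x).

Record dominated_ext := {
  ext_dom : B -> Prop;
  ext_val : B -> R;
  ext_dom_add : forall x y, ext_dom x -> ext_dom y -> ext_dom (x +_ y);
  ext_dom_scal : forall c x, ext_dom x -> ext_dom (c *_ x);
  ext_dom_sub : forall x, S x -> ext_dom x;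
  ext_val_add : forall x y, ext_dom x -> ext_dom y ->
    ext_val (x +_ y) = ext_val x + ext_val y;
  ext_val_scal : forall c x, ext_dom x -> ext_val (c *_ x) = c * ext_val x;
  ext_val_sub : forall x, S x -> ext_val x = f x;
  ext_val_le : forall x, ext_dom x -> ext_val x <= p x }.

Definition ext_le (s t : dominated_ext) : Prop :=
  (forall x, ext_dom s x -> ext_dom t x) /\
  (forall x, ext_dom s x -> ext_val s x = ext_val t x).

Lemma ext_le_refl s : ext_le s s.
Proof. split; auto. Qed.

Lemma ext_le_trans r s t : ext_le r s -> ext_le s t -> ext_le r t.
Proof.
  intros [Hrs Vrs] [Hst Vst]; split; auto.
  intros x Dx. rewrite Vrs by auto. apply Vst; auto.
Qed.

Definition trivial_ext : dominated_ext :=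
  @Build_dominated_ext S f S_add S_scal (fun x h => h) f_add f_scal
    (fun x _ => eq_refl) f_le.

Lemma ext_dom_zero t : ext_dom t zero.
Proof. rewrite <- (ba_scal0l zero). apply ext_dom_scal, ext_dom_sub, S_zero. Qed.

Section Chain.
Variable C : dominated_ext -> Prop.
Hypothesis C_total : forall s t, C s -> C t -> ext_le s t \/ ext_le t s.
Variable e0 : dominated_ext.
Hypothesis C_e0 : C e0.

Definition chain_dom x := exists e, C e /\ ext_dom e x.

Definition chain_val x : R :=
  match excluded_middle_informative (chain_dom x) with
  | left H => ext_val (proj1_sig (constructive_indefinite_description _ H)) x
  | right _ => 0
  end.

Lemma chain_val_eq e x : C e -> ext_dom e x -> chain_val x = ext_val e x.
Proof.
  intros Ce De. unfold chain_val. destruct excluded_middle_informative as [H|H].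
  - destruct (constructive_indefinite_description _ H) as [e' [Ce' De']]; simpl.
    destruct (C_total Ce Ce') as [[_ E]|[_ E]]; [symmetry|]; auto.
  - exfalso; apply H; exists e; auto.
Qed.

Lemma chain_dom2 x y : chain_dom x -> chain_dom y ->
  exists e, C e /\ ext_dom e x /\ ext_dom e y.
Proof.
  intros [e1 [C1 D1]] [e2 [C2 D2]].
  destruct (C_total C1 C2) as [[E _]|[E _]].
  - exists e2; auto.
  - exists e1; auto.
Qed.

Definition chain_sup : dominated_ext.
Proof.
  refine (@Build_dominated_ext chain_dom chain_val _ _ _ _ _ _ _).
  - intros x y Hx Hy. destruct (chain_dom2 Hx Hy) as [e [Ce [Dx Dy]]].
    exists e; split; auto. apply ext_dom_add; auto.
  - intros c x [e [Ce Dx]]. exists e; split; auto. apply ext_dom_scal; auto.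
  - intros x Sx. exists e0; split; auto. apply ext_dom_sub; auto.
  - intros x y Hx Hy. destruct (chain_dom2 Hx Hy) as [e [Ce [Dx Dy]]].
    rewrite (chain_val_eq x Ce), (chain_val_eq y Ce), (chain_val_eq (x +_ y) Ce); auto.
    + apply ext_val_add; auto.
    + apply ext_dom_add; auto.
  - intros c x [e [Ce Dx]]. rewrite (chain_val_eq x Ce), (chain_val_eq (c *_ x) Ce); auto.
    + apply ext_val_scal; auto.
    + apply ext_dom_scal; auto.
  - intros x Sx. rewrite (chain_val_eq x C_e0); [apply ext_val_sub|apply ext_dom_sub]; auto.
  - intros x [e [Ce Dx]]. rewrite (chain_val_eq x Ce); auto. apply ext_val_le; auto.
Defined.

Lemma chain_sup_ub e : C e -> ext_le e chain_sup.
Proof.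
  intros Ce; split.
  - intros x Dx; exists e; auto.
  - intros x Dx; simpl; symmetry; apply chain_val_eq; auto.
Qed.
End Chain.

Section Step.
Variables (t : dominated_ext) (x0 : B).
Hypothesis x0_out : ~ ext_dom t x0.

Lemma step_gap u v : ext_dom t u -> ext_dom t v ->
  ext_val t u - p (u +_ (-1) *_ x0) <= p (v +_ x0) - ext_val t v.
Proof.
  intros Du Dv.
  assert (E : u +_ v = (u +_ (-1) *_ x0) +_ (v +_ x0)).
  { rewrite ba_addACA, (ba_addC _ _ x0), ba_add_scalN1, ba_add0. reflexivity. }
  pose proof (ext_val_le t _ (ext_dom_add t _ _ Du Dv)) as Huv.
  rewrite ext_val_add in Huv by auto.
  pose proof (p_add (u +_ (-1) *_ x0) (v +_ x0)) as Hp. rewrite <- E in Hp. lra.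
Qed.

Definition step_lower r := exists u, ext_dom t u /\ r = ext_val t u - p (u +_ (-1) *_ x0).

Lemma step_lower_bound : bound step_lower.
Proof.
  exists (p (zero +_ x0) - ext_val t zero). intros r [u [Du ->]].
  apply step_gap; auto. apply ext_dom_zero.
Qed.

Lemma step_lower_inhabited : exists r, step_lower r.
Proof. eexists; exists zero; split; [apply ext_dom_zero|reflexivity]. Qed.

Definition step_value : R :=
  proj1_sig (completeness step_lower step_lower_bound step_lower_inhabited).

Lemma step_value_lub : is_lub step_lower step_value.
Proof. unfold step_value. apply proj2_sig. Qed.

Lemma step_value_ge u : ext_dom t u -> ext_val t u - p (u +_ (-1) *_ x0) <= step_value.
Proof. intros Du. apply step_value_lub. exists u; auto. Qed.

Lemma step_value_le v : ext_dom t v -> step_value <= p (v +_ x0) - ext_val t v.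
Proof.
  intros Dv. apply step_value_lub. intros r [u [Du ->]]. apply step_gap; auto.
Qed.

Definition step_dom y := exists u c, ext_dom t u /\ y = u +_ c *_ x0.

Lemma step_decomp_unique u1 u2 c1 c2 : ext_dom t u1 -> ext_dom t u2 ->
  u1 +_ c1 *_ x0 = u2 +_ c2 *_ x0 -> c1 = c2 /\ u1 = u2.
Proof.
  intros D1 D2 E.
  destruct (Req_dec c1 c2) as [Ec|Ec].
  - split; auto. subst c2. rewrite (ba_addC _ u1), (ba_addC _ u2) in E.
    apply ba_addIl in E; auto.
  - exfalso; apply x0_out.
    assert (Ediff : (c1 - c2) *_ x0 = u2 +_ (-1) *_ u1).
    { assert (H : (u1 +_ c1 *_ x0) +_ ((-1) *_ u1 +_ (- c2) *_ x0) =
                  (u2 +_ c2 *_ x0) +_ ((-1) *_ u1 +_ (- c2) *_ x0)) by (rewrite E; auto).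
      rewrite (ba_addACA u1), (ba_addACA u2), ba_add_scalN1, <- !ba_scalDl,
        ba_add0l in H.
      replace (c2 + - c2) with 0 in H by ring. rewrite ba_scal0l, ba_add0 in H.
      replace (c1 - c2) with (c1 + - c2) by ring. exact H. }
    replace x0 with ((/ (c1 - c2)) *_ (u2 +_ (-1) *_ u1)).
    + apply ext_dom_scal, ext_dom_add; auto. apply ext_dom_scal; auto.
    + rewrite <- Ediff, ba_scalA, Rinv_l by lra. apply ba_scal1.
Qed.

Definition step_val y : R :=
  match excluded_middle_informative (step_dom y) with
  | left H =>
     let (u, Hu) := constructive_indefinite_description _ H in
     let (c, _) := constructive_indefinite_description _ Hu in
     ext_val t u + c * step_value
  | right _ => 0
  end.

Lemma step_val_eq u c : ext_dom t u -> step_val (u +_ c *_ x0) = ext_val t u + c * step_value.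
Proof.
  intros Du. unfold step_val. destruct excluded_middle_informative as [H|H].
  - destruct (constructive_indefinite_description _ H) as [u' Hu'].
    destruct (constructive_indefinite_description _ Hu') as [c' [Du' E]].
    destruct (step_decomp_unique _ _ _ _ Du Du' E) as [-> ->]. reflexivity.
  - exfalso; apply H; exists u, c; auto.
Qed.

Lemma add_scal0 u : u +_ 0 *_ x0 = u.
Proof. rewrite ba_scal0l, ba_add0; auto. Qed.

(* Rescale [u + c x0] to [u/|c| ± x0]: the two bounds on [step_value] are the
   cases [c < 0] and [c > 0]. *)
Lemma step_val_le u c : ext_dom t u -> step_val (u +_ c *_ x0) <= p (u +_ c *_ x0).
Proof.
  intros Du. rewrite step_val_eq by auto.
  destruct (Rtotal_order c 0) as [Hc|[Hc|Hc]].
  - pose proof (step_value_ge _ (ext_dom_scal t (/ - c) _ Du)) as H.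
    rewrite ext_val_scal in H by auto.
    replace (u +_ c *_ x0) with ((- c) *_ ((/ - c) *_ u +_ (-1) *_ x0)).
    + rewrite p_scal by lra.
      apply (Rmult_le_compat_l (- c)) in H; [|lra].
      replace (- c * (/ - c * ext_val t u - p ((/ - c) *_ u +_ (-1) *_ x0))) with
        (ext_val t u - - c * p ((/ - c) *_ u +_ (-1) *_ x0)) in H by (field; lra).
      lra.
    + rewrite ba_scalDr, !ba_scalA, Rinv_r by lra. rewrite ba_scal1.
      f_equal. f_equal. ring.
  - subst c. rewrite add_scal0. pose proof (ext_val_le t _ Du). lra.
  - pose proof (step_value_le _ (ext_dom_scal t (/ c) _ Du)) as H.
    rewrite ext_val_scal in H by auto.
    replace (u +_ c *_ x0) with (c *_ ((/ c) *_ u +_ x0)).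
    + rewrite p_scal by lra.
      apply (Rmult_le_compat_l c) in H; [|lra].
      replace (c * (p ((/ c) *_ u +_ x0) - / c * ext_val t u)) with
        (c * p ((/ c) *_ u +_ x0) - ext_val t u) in H by (field; lra).
      lra.
    + rewrite ba_scalDr, !ba_scalA, Rinv_r by lra. rewrite ba_scal1; auto.
Qed.

Definition step_ext : dominated_ext.
Proof.
  refine (@Build_dominated_ext step_dom step_val _ _ _ _ _ _ _).
  - intros x y [u1 [c1 [D1 ->]]] [u2 [c2 [D2 ->]]].
    exists (u1 +_ u2), (c1 + c2); split.
    + apply ext_dom_add; auto.
    + rewrite ba_addACA, ba_scalDl; auto.
  - intros c x [u [d [D ->]]]. exists (c *_ u), (c * d); split.
    + apply ext_dom_scal; auto.
    + rewrite ba_scalDr, ba_scalA; auto.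
  - intros x Sx. exists x, 0; split; [apply ext_dom_sub; auto|rewrite add_scal0; auto].
  - intros x y [u1 [c1 [D1 ->]]] [u2 [c2 [D2 ->]]].
    rewrite ba_addACA, <- ba_scalDl, !step_val_eq by (auto; apply ext_dom_add; auto).
    rewrite ext_val_add by auto. ring.
  - intros c x [u [d [D ->]]].
    rewrite ba_scalDr, ba_scalA, !step_val_eq by (auto; apply ext_dom_scal; auto).
    rewrite ext_val_scal by auto. ring.
  - intros x Sx. rewrite <- (add_scal0 x), step_val_eq by (apply ext_dom_sub; auto).
    rewrite add_scal0, ext_val_sub by auto. ring.
  - intros x [u [c [D ->]]]. apply step_val_le; auto.
Defined.

Lemma step_ext_gt : ext_le t step_ext /\ ext_dom step_ext x0.
Proof.
  split; [split|].
  - intros x Dx. exists x, 0; split; auto. rewrite add_scal0; auto.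
  - intros x Dx. simpl. rewrite <- (add_scal0 x) at 2. rewrite step_val_eq by auto. ring.
  - exists zero, 1. split; [apply ext_dom_zero|]. rewrite ba_scal1, ba_add0l; auto.
Qed.
End Step.

Lemma hahn_banach : exists g : B -> R,
  (forall x y, g (x +_ y) = g x + g y) /\ (forall c x, g (c *_ x) = c * g x) /\
  (forall x, S x -> g x = f x) /\ (forall x, g x <= p x).
Proof.
  pose (le := fun s t => boolp.asbool (ext_le s t)).
  assert (leP : forall s t, is_true (le s t) <-> ext_le s t).
  { intros s t. symmetry. apply Bool.reflect_iff, boolp.asboolP. }
  destruct (classical_sets.ZL_preorder trivial_ext (R := le)) as [m Hm].
  - intros s; apply leP, ext_le_refl.
  - intros r s t Hr Hs. apply leP. apply leP in Hr, Hs. eapply ext_le_trans; eauto.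
  - intros C C_total. destruct (classic (exists e, C e)) as [[e0 Ce0]|NE].
    + assert (C_total' : forall s t, C s -> C t -> ext_le s t \/ ext_le t s).
      { intros s t Cs Ct. destruct (C_total s t Cs Ct); [left|right]; apply leP; auto. }
      exists (chain_sup _ C_total' _ Ce0). intros s Cs. apply leP, chain_sup_ub; auto.
    + exists trivial_ext. intros s Cs. exfalso; apply NE; eauto.
  - assert (m_full : forall x, ext_dom m x).
    { intros x. apply NNPP; intro x_out.
      destruct (step_ext_gt _ _ x_out) as [Hle Hx].
      specialize (Hm (step_ext _ _ x_out) (proj2 (leP _ _) Hle)).
      apply leP in Hm. apply x_out, (proj1 Hm); auto. }
    exists (ext_val m). repeat split; intros.
    + apply ext_val_add; auto.
    + apply ext_val_scal; auto.
    + apply ext_val_sub; auto.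
    + apply ext_val_le; auto.
Qed.
End HahnBanach.

Lemma bounded_by_Rabs (X : Type) (norm : X -> R) f K : (forall x, 0 <= norm x) ->
  bounded_by norm f K -> bounded_by norm f (Rabs K).
Proof.
  intros N H x. eapply Rle_trans; [apply H|]. apply Rmult_le_compat_r; auto. apply Rle_abs.
Qed.

Section Contraction.
Variables (X Y : Type) (addX : X -> X -> X) (scalX : R -> X -> X) (normX : X -> R)
  (addY : Y -> Y -> Y) (scalY : R -> Y -> Y) (normY : Y -> R).
Hypothesis normY_ge0 : forall y, 0 <= normY y.

Definition contraction (T : X -> Y) : Prop :=
  (forall x y, T (addX x y) = addY (T x) (T y)) /\
  (forall c x, T (scalX c x) = scalY c (T x)) /\
  (forall x, normY (T x) <= normX x).

Variable T : X -> Y.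
Hypothesis T_contr : contraction T.

Lemma bounded_by_comp f K : 0 <= K ->
  bounded_by normY f K -> bounded_by normX (fun x => f (T x)) K.
Proof.
  destruct T_contr as [_ [_ T_le]]. intros K0 fK x.
  eapply Rle_trans; [apply fK|]. apply Rmult_le_compat_l; auto.
Qed.

Lemma is_dual_comp f : is_dual addY scalY normY f -> is_dual addX scalX normX (fun x => f (T x)).
Proof.
  destruct T_contr as [T_add [T_scal _]]. intros [f_add [f_scal [K fK]]]. repeat split.
  - intros; rewrite T_add, f_add; auto.
  - intros; rewrite T_scal, f_scal; auto.
  - exists (Rabs K). apply bounded_by_comp; [apply Rabs_pos|]. apply bounded_by_Rabs; auto.
Qed.

Lemma is_bidual_second_adjoint F :
  is_bidual addX scalX normX F -> is_bidual addY scalY normY (second_adjoint T F).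
Proof.
  intros [F_add [F_scal [M FM]]]. unfold second_adjoint. repeat split.
  - intros f g df dg. apply F_add; apply is_dual_comp; auto.
  - intros c f df. apply F_scal; apply is_dual_comp; auto.
  - exists M. intros f K df K0 fK. apply FM; auto.
    + apply is_dual_comp; auto.
    + apply bounded_by_comp; auto.
Qed.
End Contraction.

Section ArensCalculus.
Variables (X : Type) (add : X -> X -> X) (scal : R -> X -> X) (norm : X -> R)
  (mul : X -> X -> X).
Hypotheses (norm_ge0 : forall x, 0 <= norm x)
  (mulDl : forall x y w, mul (add x y) w = add (mul x w) (mul y w))
  (mulDr : forall x y w, mul w (add x y) = add (mul w x) (mul w y))
  (mulZl : forall c x y, mul (scal c x) y = scal c (mul x y))
  (mulZr : forall c x y, mul x (scal c y) = scal c (mul x y))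
  (normM : forall x y, norm (mul x y) <= norm x * norm y).
Local Notation dual := (is_dual add scal norm).
Local Notation bidual := (is_bidual add scal norm).

Lemma ract_fun_dual f a : dual f -> dual (ract_fun mul f a) /\
  forall K, bounded_by norm f K -> bounded_by norm (ract_fun mul f a) (Rabs K * norm a).
Proof.
  intros [f_add [f_scal [K fK]]]. unfold ract_fun.
  assert (Hb : forall K, bounded_by norm f K ->
     bounded_by norm (fun b => f (mul a b)) (Rabs K * norm a)).
  { intros K' H x. apply bounded_by_Rabs in H; auto. eapply Rle_trans; [apply H|].
    rewrite Rmult_assoc. apply Rmult_le_compat_l; [apply Rabs_pos|apply normM]. }
  repeat split; eauto.
  - intros; rewrite mulDr, f_add; auto.
  - intros; rewrite mulZr, f_scal; auto.
Qed.

Lemma lact_fun_dual f a : dual f -> dual (lact_fun mul a f) /\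
  forall K, bounded_by norm f K -> bounded_by norm (lact_fun mul a f) (Rabs K * norm a).
Proof.
  intros [f_add [f_scal [K fK]]]. unfold lact_fun.
  assert (Hb : forall K, bounded_by norm f K ->
     bounded_by norm (fun b => f (mul b a)) (Rabs K * norm a)).
  { intros K' H x. apply bounded_by_Rabs in H; auto. eapply Rle_trans; [apply H|].
    rewrite Rmult_assoc. apply Rmult_le_compat_l; [apply Rabs_pos|].
    rewrite Rmult_comm. apply normM. }
  repeat split; eauto.
  - intros; rewrite mulDl, f_add; auto.
  - intros; rewrite mulZl, f_scal; auto.
Qed.

Lemma lact_bid_dual G f : bidual G -> dual f -> dual (lact_bid mul G f).
Proof.
  intros [G_add [G_scal [M GM]]] df. pose proof df as [f_add [f_scal [K fK]]].
  unfold lact_bid. repeat split.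
  - intros a b.
    replace (ract_fun mul f (add a b)) with
      (fun y => ract_fun mul f a y + ract_fun mul f b y).
    + apply G_add; apply ract_fun_dual; auto.
    + extensionality y. unfold ract_fun. rewrite mulDl, f_add; auto.
  - intros c a.
    replace (ract_fun mul f (scal c a)) with (fun y => c * ract_fun mul f a y).
    + apply G_scal; apply ract_fun_dual; auto.
    + extensionality y. unfold ract_fun. rewrite mulZl, f_scal; auto.
  - exists (M * Rabs K). intros a. rewrite Rmult_assoc.
    apply GM; [apply ract_fun_dual; auto| |apply ract_fun_dual; auto].
    apply Rmult_le_pos; auto; apply Rabs_pos.
Qed.

Lemma ract_bid_dual F f : bidual F -> dual f -> dual (ract_bid mul f F).
Proof.
  intros [F_add [F_scal [M FM]]] df. pose proof df as [f_add [f_scal [K fK]]].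
  unfold ract_bid. repeat split.
  - intros a b.
    replace (lact_fun mul (add a b) f) with
      (fun y => lact_fun mul a f y + lact_fun mul b f y).
    + apply F_add; apply lact_fun_dual; auto.
    + extensionality y. unfold lact_fun. rewrite mulDr, f_add; auto.
  - intros c a.
    replace (lact_fun mul (scal c a) f) with (fun y => c * lact_fun mul a f y).
    + apply F_scal; apply lact_fun_dual; auto.
    + extensionality y. unfold lact_fun. rewrite mulZr, f_scal; auto.
  - exists (M * Rabs K). intros a. rewrite Rmult_assoc.
    apply FM; [apply lact_fun_dual; auto| |apply lact_fun_dual; auto].
    apply Rmult_le_pos; auto; apply Rabs_pos.
Qed.

Section Split.
Variables (F F1 F2 G G1 G2 : (X -> R) -> R).
Hypotheses (F_bid : bidual F) (F1_bid : bidual F1) (F2_bid : bidual F2)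
  (G_bid : bidual G) (G1_bid : bidual G1) (G2_bid : bidual G2)
  (F_split : forall h, dual h -> F h = F1 h + F2 h)
  (G_split : forall h, dual h -> G h = G1 h + G2 h).

Lemma arens_box_split f : dual f ->
  arens_box mul F G f =
  arens_box mul F1 G1 f + arens_box mul F1 G2 f +
  arens_box mul F2 G1 f + arens_box mul F2 G2 f.
Proof.
  intros df. unfold arens_box.
  rewrite F_split by (apply lact_bid_dual; auto).
  replace (lact_bid mul G f) with (fun x => lact_bid mul G1 f x + lact_bid mul G2 f x).
  - destruct F1_bid as [F1_add _]. destruct F2_bid as [F2_add _].
    rewrite F1_add, F2_add by (apply lact_bid_dual; auto). ring.
  - extensionality x. unfold lact_bid. symmetry. apply G_split, ract_fun_dual; auto.
Qed.

Lemma arens_diamond_split f : dual f ->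
  arens_diamond mul F G f =
  arens_diamond mul F1 G1 f + arens_diamond mul F1 G2 f +
  arens_diamond mul F2 G1 f + arens_diamond mul F2 G2 f.
Proof.
  intros df. unfold arens_diamond.
  rewrite G_split by (apply ract_bid_dual; auto).
  replace (ract_bid mul f F) with (fun x => ract_bid mul f F1 x + ract_bid mul f F2 x).
  - destruct G1_bid as [G1_add _]. destruct G2_bid as [G2_add _].
    rewrite G1_add, G2_add by (apply ract_bid_dual; auto). ring.
  - extensionality x. unfold ract_bid. symmetry. apply F_split, lact_fun_dual; auto.
Qed.
End Split.
End ArensCalculus.

(* For second adjoints the Arens products are plain iterated evaluations,
   [(S** Phi) [] (T** Gam) : g |-> Phi (x |-> Gam (y |-> g (S x * T y)))]. *)
Section SecondAdjointProducts.
Variables (X1 X2 Z Z' : Type) (mul : Z -> Z -> Z) (mul' : Z' -> Z' -> Z')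
  (S : X1 -> Z) (T : X2 -> Z) (S' : X1 -> Z') (T' : X2 -> Z')
  (Phi : (X1 -> R) -> R) (Gam : (X2 -> R) -> R) (g : Z -> R) (g' : Z' -> R).
Hypothesis g_eq : forall x y, g (mul (S x) (T y)) = g' (mul' (S' x) (T' y)).

Lemma arens_box_second_adjoint_congr :
  arens_box mul (second_adjoint S Phi) (second_adjoint T Gam) g =
  arens_box mul' (second_adjoint S' Phi) (second_adjoint T' Gam) g'.
Proof.
  unfold arens_box, lact_bid, ract_fun, second_adjoint.
  f_equal. extensionality x. f_equal. extensionality y. apply g_eq.
Qed.

Lemma arens_diamond_second_adjoint_congr :
  arens_diamond mul (second_adjoint S Phi) (second_adjoint T Gam) g =
  arens_diamond mul' (second_adjoint S' Phi) (second_adjoint T' Gam) g'.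
Proof.
  unfold arens_diamond, ract_bid, lact_fun, second_adjoint.
  f_equal. extensionality y. f_equal. extensionality x. apply g_eq.
Qed.
End SecondAdjointProducts.

Section Amalgam.
Variables (A B : BanachAlg) (theta : A -> B) (I : closed_ideal B).
Hypotheses
  (theta_add : forall x y, theta (ba_add A x y) = ba_add B (theta x) (theta y))
  (theta_scal : forall c x, theta (ba_scal A c x) = ba_scal B c (theta x))
  (theta_contr : forall x, ba_norm B (theta x) <= ba_norm A x).

Local Notation X := (@amalg_car B I A).
Local Notation xadd := (@amalg_add B I A).
Local Notation xscal := (@amalg_scal B I A).
Local Notation xnorm := (@amalg_norm B I A).
Local Notation xmul := (@amalg_mul B I A theta).
Local Notation iadd := (@ideal_add B I).
Local Notation iscal := (@ideal_scal B I).
Local Notation inorm := (@ideal_norm B I).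
Local Notation imul := (@ideal_mul B I).
Local Notation adual := (is_dual (@ba_add A) (@ba_scal A) (@ba_norm A)).
Local Notation abid := (is_bidual (@ba_add A) (@ba_scal A) (@ba_norm A)).
Local Notation bdual := (is_dual (@ba_add B) (@ba_scal B) (@ba_norm B)).
Local Notation idual := (is_dual iadd iscal inorm).
Local Notation ibid := (is_bidual iadd iscal inorm).
Local Notation xdual := (is_dual xadd xscal xnorm).
Local Notation xbid := (is_bidual xadd xscal xnorm).

Lemma ideal_car_eq (x y : ideal_car I) : proj1_sig x = proj1_sig y -> x = y.
Proof.
  destruct x as [x px], y as [y py]; simpl; intros ->. f_equal. apply proof_irrelevance.
Qed.

Definition ideal_zero : ideal_car I := exist _ (ba_zero B) (ci_zero I).
Definition amalg_inl (a : A) : X := (a, ideal_zero).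
Definition amalg_inr (i : ideal_car I) : X := (ba_zero A, i).

Lemma theta_zero : theta (ba_zero A) = ba_zero B.
Proof. rewrite <- (ba_scal0l (ba_zero A)), theta_scal. apply ba_scal0l. Qed.

Lemma ideal_norm_ge0 i : 0 <= inorm i.
Proof. apply ba_norm_ge0. Qed.

Lemma amalg_norm_ge0 x : 0 <= xnorm x.
Proof.
  destruct x as [a i]. unfold amalg_norm; simpl.
  pose proof (ba_norm_ge0 A a); pose proof (ideal_norm_ge0 i); lra.
Qed.

Lemma fst_contraction : contraction xadd xscal xnorm (@ba_add A) (@ba_scal A) (@ba_norm A) fst.
Proof.
  repeat split. intros [a i]; unfold amalg_norm; simpl.
  pose proof (ideal_norm_ge0 i); lra.
Qed.

Lemma snd_contraction : contraction xadd xscal xnorm iadd iscal inorm snd.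
Proof.
  repeat split. intros [a i]; unfold amalg_norm; simpl.
  pose proof (ba_norm_ge0 A a); lra.
Qed.

Lemma inl_contraction :
  contraction (@ba_add A) (@ba_scal A) (@ba_norm A) xadd xscal xnorm amalg_inl.
Proof.
  repeat split.
  - intros x y; unfold amalg_inl, amalg_add; simpl. f_equal. apply ideal_car_eq; simpl.
    symmetry; apply ba_add0.
  - intros c x; unfold amalg_inl, amalg_scal; simpl. f_equal. apply ideal_car_eq; simpl.
    symmetry; apply ba_scal0r.
  - intros x; unfold amalg_inl, amalg_norm, ideal_norm; simpl. rewrite ba_norm_zero; lra.
Qed.

Lemma inr_contraction : contraction iadd iscal inorm xadd xscal xnorm amalg_inr.
Proof.
  repeat split.
  - intros x y; unfold amalg_inr, amalg_add; simpl. f_equal. symmetry; apply ba_add0.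
  - intros c x; unfold amalg_inr, amalg_scal; simpl. f_equal. symmetry; apply ba_scal0r.
  - intros x; unfold amalg_inr, amalg_norm; simpl. rewrite ba_norm_zero; lra.
Qed.

Lemma incl_contraction :
  contraction iadd iscal inorm (@ba_add B) (@ba_scal B) (@ba_norm B) (@ideal_incl B I).
Proof. repeat split. intros; unfold ideal_norm, ideal_incl; lra. Qed.

Lemma fst_dual phi : adual phi -> xdual (fun x => phi (fst x)).
Proof. apply is_dual_comp; [apply ba_norm_ge0|apply fst_contraction]. Qed.

Lemma snd_dual phi : idual phi -> xdual (fun x => phi (snd x)).
Proof. apply is_dual_comp; [apply ideal_norm_ge0|apply snd_contraction]. Qed.

Lemma inl_dual f : xdual f -> adual (fun a => f (amalg_inl a)).
Proof. apply is_dual_comp; [apply amalg_norm_ge0|apply inl_contraction]. Qed.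

Lemma inr_dual f : xdual f -> idual (fun i => f (amalg_inr i)).
Proof. apply is_dual_comp; [apply amalg_norm_ge0|apply inr_contraction]. Qed.

Lemma incl_dual g : bdual g -> idual (fun i => g (ideal_incl i)).
Proof. apply is_dual_comp; [apply ba_norm_ge0|apply incl_contraction]. Qed.

Lemma fst_bidual F : xbid F -> abid (second_adjoint fst F).
Proof. apply is_bidual_second_adjoint; [apply ba_norm_ge0|apply fst_contraction]. Qed.

Lemma snd_bidual F : xbid F -> ibid (second_adjoint snd F).
Proof. apply is_bidual_second_adjoint; [apply ideal_norm_ge0|apply snd_contraction]. Qed.

Lemma inl_bidual Phi : abid Phi -> xbid (second_adjoint amalg_inl Phi).
Proof. apply is_bidual_second_adjoint; [apply amalg_norm_ge0|apply inl_contraction]. Qed.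

Lemma inr_bidual Gam : ibid Gam -> xbid (second_adjoint amalg_inr Gam).
Proof. apply is_bidual_second_adjoint; [apply amalg_norm_ge0|apply inr_contraction]. Qed.

Lemma amalg_mulDl x y w : xmul (xadd x y) w = xadd (xmul x w) (xmul y w).
Proof.
  destruct x as [a1 [i1 p1]], y as [a2 [i2 p2]], w as [a [i p]].
  unfold amalg_mul, amalg_add; simpl. f_equal; [apply ba_mulDl|]. apply ideal_car_eq; simpl.
  rewrite theta_add, !ba_mulDl, (ba_addACA (ba_mul B (theta a1) i)),
    (ba_addACA (ba_add B (ba_mul B (theta a1) i) (ba_mul B i1 (theta a)))).
  reflexivity.
Qed.

Lemma amalg_mulDr x y w : xmul w (xadd x y) = xadd (xmul w x) (xmul w y).
Proof.
  destruct x as [a1 [i1 p1]], y as [a2 [i2 p2]], w as [a [i p]].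
  unfold amalg_mul, amalg_add; simpl. f_equal; [apply ba_mulDr|]. apply ideal_car_eq; simpl.
  rewrite theta_add, !ba_mulDr, (ba_addACA (ba_mul B (theta a) i1)),
    (ba_addACA (ba_add B (ba_mul B (theta a) i1) (ba_mul B i (theta a1)))).
  reflexivity.
Qed.

Lemma amalg_mulZl c x y : xmul (xscal c x) y = xscal c (xmul x y).
Proof.
  destruct x as [a1 [i1 p1]], y as [a2 [i2 p2]].
  unfold amalg_mul, amalg_scal; simpl. f_equal; [apply ba_mulZl|]. apply ideal_car_eq; simpl.
  rewrite theta_scal, !ba_mulZl, !ba_scalDr. reflexivity.
Qed.

Lemma amalg_mulZr c x y : xmul x (xscal c y) = xscal c (xmul x y).
Proof.
  destruct x as [a1 [i1 p1]], y as [a2 [i2 p2]].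
  unfold amalg_mul, amalg_scal; simpl. f_equal; [apply ba_mulZr|]. apply ideal_car_eq; simpl.
  rewrite theta_scal, !ba_mulZr, !ba_scalDr. reflexivity.
Qed.

Lemma amalg_normM x y : xnorm (xmul x y) <= xnorm x * xnorm y.
Proof.
  destruct x as [a1 [i1 p1]], y as [a2 [i2 p2]].
  unfold amalg_mul, amalg_norm, ideal_norm; simpl.
  pose proof (ba_normD B (ba_add B (ba_mul B (theta a1) i2) (ba_mul B i1 (theta a2)))
    (ba_mul B i1 i2)).
  pose proof (ba_normD B (ba_mul B (theta a1) i2) (ba_mul B i1 (theta a2))).
  pose proof (ba_normM A a1 a2). pose proof (ba_normM B (theta a1) i2).
  pose proof (ba_normM B i1 (theta a2)). pose proof (ba_normM B i1 i2).
  pose proof (theta_contr a1). pose proof (theta_contr a2).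
  pose proof (ba_norm_ge0 B i1). pose proof (ba_norm_ge0 B i2).
  pose proof (ba_norm_ge0 A a1). pose proof (ba_norm_ge0 A a2).
  assert (ba_norm B (theta a1) * ba_norm B i2 <= ba_norm A a1 * ba_norm B i2) by nra.
  assert (ba_norm B i1 * ba_norm B (theta a2) <= ba_norm B i1 * ba_norm A a2) by nra.
  nra.
Qed.

Lemma amalg_mul_inl a a' : xmul (amalg_inl a) (amalg_inl a') = amalg_inl (ba_mul A a a').
Proof.
  unfold amalg_mul, amalg_inl; simpl. f_equal. apply ideal_car_eq; simpl.
  rewrite ba_mul0r, !ba_mul0l, !ba_add0. reflexivity.
Qed.

Lemma amalg_mul_inl_inr a i : xmul (amalg_inl a) (amalg_inr i) =
  amalg_inr (exist _ (ba_mul B (theta a) (proj1_sig i)) (ci_mull I (theta a) _ (proj2_sig i))).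
Proof.
  unfold amalg_mul, amalg_inl, amalg_inr; simpl. f_equal; [apply ba_mul0r|].
  apply ideal_car_eq; simpl. rewrite !ba_mul0l, !ba_add0. reflexivity.
Qed.

Lemma amalg_mul_inr_inl i a : xmul (amalg_inr i) (amalg_inl a) =
  amalg_inr (exist _ (ba_mul B (proj1_sig i) (theta a)) (ci_mulr I _ (theta a) (proj2_sig i))).
Proof.
  unfold amalg_mul, amalg_inl, amalg_inr; simpl. f_equal; [apply ba_mul0l|].
  apply ideal_car_eq; simpl. rewrite theta_zero, ba_mul0l, ba_mul0r, ba_add0l, ba_add0.
  reflexivity.
Qed.

Lemma amalg_mul_inr i j : xmul (amalg_inr i) (amalg_inr j) = amalg_inr (imul i j).
Proof.
  unfold amalg_mul, amalg_inr; simpl. f_equal; [apply ba_mul0l|]. apply ideal_car_eq; simpl.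
  rewrite theta_zero, ba_mul0l, ba_mul0r, !ba_add0l. reflexivity.
Qed.

Lemma amalg_dual_split psi x : xdual psi ->
  psi x = psi (amalg_inl (fst x)) + psi (amalg_inr (snd x)).
Proof.
  intros [psi_add _]. rewrite <- psi_add. f_equal. destruct x as [a i].
  unfold amalg_inl, amalg_inr, amalg_add; simpl. f_equal.
  - symmetry; apply ba_add0.
  - apply ideal_car_eq; simpl. symmetry; apply ba_add0l.
Qed.

Lemma amalg_bidual_split F psi : xbid F -> xdual psi ->
  F psi = second_adjoint amalg_inl (second_adjoint fst F) psi +
          second_adjoint amalg_inr (second_adjoint snd F) psi.
Proof.
  intros [F_add _] dpsi. unfold second_adjoint.
  rewrite <- F_add.
  - f_equal. extensionality x. apply amalg_dual_split; auto.
  - apply (fst_dual (inl_dual dpsi)).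
  - apply (snd_dual (inr_dual dpsi)).
Qed.

Lemma ideal_dual_extends phi : idual phi ->
  exists g, bdual g /\ forall i, g (ideal_incl i) = phi i.
Proof.
  intros [phi_add [phi_scal [K phiK]]].
  pose (phiB := fun x => match excluded_middle_informative (ci_mem I x) with
                         | left px => phi (exist _ x px) | right _ => 0 end).
  assert (phiB_eq : forall x (px : ci_mem I x), phiB x = phi (exist _ x px)).
  { intros x px. unfold phiB. destruct excluded_middle_informative as [q|q].
    - f_equal; apply ideal_car_eq; auto.
    - contradiction. }
  destruct (@hahn_banach B (fun x => Rabs K * ba_norm B x) (ci_mem I) phiB)
    as [g [g_add [g_scal [g_ext g_le]]]].
  - intros x y. pose proof (ba_normD B x y). pose proof (Rabs_pos K). nra.
  - intros c x c0. rewrite ba_normZ, (Rabs_pos_eq c) by auto. ring.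
  - apply ci_zero.
  - apply ci_add.
  - apply ci_scal.
  - intros x y px py. rewrite (phiB_eq _ (ci_add I _ _ px py)), (phiB_eq _ px), (phiB_eq _ py).
    rewrite <- phi_add. reflexivity.
  - intros c x px. rewrite (phiB_eq _ (ci_scal I c _ px)), (phiB_eq _ px).
    rewrite <- phi_scal. reflexivity.
  - intros x px. rewrite (phiB_eq _ px). eapply Rle_trans; [apply Rle_abs|].
    exact (bounded_by_Rabs ideal_norm_ge0 phiK (exist _ x px)).
  - exists g. split.
    + repeat split; auto. exists (Rabs K). intros x. apply Rabs_le. split.
      * pose proof (g_le (ba_scal B (-1) x)) as Hneg.
        rewrite g_scal, ba_norm_scalN1 in Hneg. lra.
      * apply g_le.
    + intros [i pi]. simpl. rewrite g_ext by auto. apply phiB_eq.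
Qed.

Definition regular_actions : Prop :=
  forall (Phi : (A -> R) -> R) (Gam : (ideal_car I -> R) -> R),
    abid Phi -> ibid Gam ->
    let F := second_adjoint theta Phi in
    let G := second_adjoint (@ideal_incl B I) Gam in
    bidual_eq (@ba_add B) (@ba_scal B) (@ba_norm B)
      (arens_box (@ba_mul B) F G) (arens_diamond (@ba_mul B) F G) /\
    bidual_eq (@ba_add B) (@ba_scal B) (@ba_norm B)
      (arens_box (@ba_mul B) G F) (arens_diamond (@ba_mul B) G F).

Local Notation inl_part F := (second_adjoint amalg_inl (second_adjoint fst F)).
Local Notation inr_part F := (second_adjoint amalg_inr (second_adjoint snd F)).

Lemma amalg_arens_box_split F G f : xbid F -> xbid G -> xdual f ->
  arens_box xmul F G f =
  arens_box xmul (inl_part F) (inl_part G) f + arens_box xmul (inl_part F) (inr_part G) f +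
  arens_box xmul (inr_part F) (inl_part G) f + arens_box xmul (inr_part F) (inr_part G) f.
Proof.
  intros F_bid G_bid f_dual.
  apply (arens_box_split (add := xadd) (scal := xscal) (norm := xnorm));
    auto using amalg_norm_ge0, amalg_mulDl, amalg_mulDr, amalg_mulZl, amalg_mulZr,
      amalg_normM, inl_bidual, inr_bidual, fst_bidual, snd_bidual, amalg_bidual_split.
Qed.

Lemma amalg_arens_diamond_split F G f : xbid F -> xbid G -> xdual f ->
  arens_diamond xmul F G f =
  arens_diamond xmul (inl_part F) (inl_part G) f +
  arens_diamond xmul (inl_part F) (inr_part G) f +
  arens_diamond xmul (inr_part F) (inl_part G) f +
  arens_diamond xmul (inr_part F) (inr_part G) f.
Proof.
  intros F_bid G_bid f_dual.
  apply (arens_diamond_split (add := xadd) (scal := xscal) (norm := xnorm));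
    auto using amalg_norm_ge0, amalg_mulDl, amalg_mulDr, amalg_mulZl, amalg_mulZr,
      amalg_normM, inl_bidual, inr_bidual, fst_bidual, snd_bidual, amalg_bidual_split.
Qed.

Section Components.
Variables (Fa Ga : (A -> R) -> R) (Fi Gi : (ideal_car I -> R) -> R) (f : X -> R).
Hypotheses (Fa_bid : abid Fa) (Ga_bid : abid Ga) (Fi_bid : ibid Fi) (Gi_bid : ibid Gi)
  (f_dual : xdual f).

Lemma inl_inl_regular : ba_arens_regular A ->
  arens_box xmul (second_adjoint amalg_inl Fa) (second_adjoint amalg_inl Ga) f =
  arens_diamond xmul (second_adjoint amalg_inl Fa) (second_adjoint amalg_inl Ga) f.
Proof.
  intros HA.
  assert (Hf : forall a a', f (xmul (amalg_inl a) (amalg_inl a')) =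
                            f (amalg_inl (ba_mul A a a'))).
  { intros; rewrite amalg_mul_inl; reflexivity. }
  rewrite (arens_box_second_adjoint_congr _ (ba_mul A) _ _ (fun a => a) (fun a => a) _ _ _
      (fun a => f (amalg_inl a)) Hf),
    (arens_diamond_second_adjoint_congr _ (ba_mul A) _ _ (fun a => a) (fun a => a) _ _ _
      (fun a => f (amalg_inl a)) Hf).
  apply HA; auto. apply inl_dual; auto.
Qed.

Lemma inr_inr_regular : ideal_arens_regular I ->
  arens_box xmul (second_adjoint amalg_inr Fi) (second_adjoint amalg_inr Gi) f =
  arens_diamond xmul (second_adjoint amalg_inr Fi) (second_adjoint amalg_inr Gi) f.
Proof.
  intros HI.
  assert (Hf : forall i j, f (xmul (amalg_inr i) (amalg_inr j)) = f (amalg_inr (imul i j))).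
  { intros; rewrite amalg_mul_inr; reflexivity. }
  rewrite (arens_box_second_adjoint_congr _ imul _ _ (fun i => i) (fun i => i) _ _ _
      (fun i => f (amalg_inr i)) Hf),
    (arens_diamond_second_adjoint_congr _ imul _ _ (fun i => i) (fun i => i) _ _ _
      (fun i => f (amalg_inr i)) Hf).
  apply HI; auto. apply inr_dual; auto.
Qed.

Variables (g : B -> R).
Hypotheses (g_dual : bdual g) (g_ext : forall i, g (ideal_incl i) = f (amalg_inr i)).

Lemma inl_inr_regular : regular_actions ->
  arens_box xmul (second_adjoint amalg_inl Fa) (second_adjoint amalg_inr Gi) f =
  arens_diamond xmul (second_adjoint amalg_inl Fa) (second_adjoint amalg_inr Gi) f.
Proof.
  intros Hact.
  assert (Hf : forall a i, f (xmul (amalg_inl a) (amalg_inr i)) =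
                           g (ba_mul B (theta a) (ideal_incl i))).
  { intros; rewrite amalg_mul_inl_inr, <- g_ext; reflexivity. }
  rewrite (arens_box_second_adjoint_congr _ (ba_mul B) _ _ theta (@ideal_incl B I) _ _ _ g Hf),
    (arens_diamond_second_adjoint_congr _ (ba_mul B) _ _ theta (@ideal_incl B I) _ _ _ g Hf).
  apply (Hact Fa Gi Fa_bid Gi_bid); auto.
Qed.

Lemma inr_inl_regular : regular_actions ->
  arens_box xmul (second_adjoint amalg_inr Fi) (second_adjoint amalg_inl Ga) f =
  arens_diamond xmul (second_adjoint amalg_inr Fi) (second_adjoint amalg_inl Ga) f.
Proof.
  intros Hact.
  assert (Hf : forall i a, f (xmul (amalg_inr i) (amalg_inl a)) =
                           g (ba_mul B (ideal_incl i) (theta a))).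
  { intros; rewrite amalg_mul_inr_inl, <- g_ext; reflexivity. }
  rewrite (arens_box_second_adjoint_congr _ (ba_mul B) _ _ (@ideal_incl B I) theta _ _ _ g Hf),
    (arens_diamond_second_adjoint_congr _ (ba_mul B) _ _ (@ideal_incl B I) theta _ _ _ g Hf).
  apply (Hact Ga Fi Ga_bid Fi_bid); auto.
Qed.
End Components.

Lemma amalg_regular_of_components : ba_arens_regular A -> ideal_arens_regular I ->
  regular_actions -> @amalg_arens_regular B I A theta.
Proof.
  intros HA HI Hact F G F_bid G_bid f f_dual.
  destruct (ideal_dual_extends (inr_dual f_dual)) as [g [g_dual g_ext]].
  rewrite amalg_arens_box_split, amalg_arens_diamond_split by auto.
  rewrite inl_inl_regular, inr_inr_regular; auto using fst_bidual, snd_bidual.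
  rewrite inl_inr_regular with (g := g), inr_inl_regular with (g := g);
    auto using fst_bidual, snd_bidual.
Qed.

Lemma amalg_regular_base_regular : @amalg_arens_regular B I A theta -> ba_arens_regular A.
Proof.
  intros H Phi Psi Phi_bid Psi_bid phi phi_dual.
  pose proof (H _ _ (inl_bidual Phi_bid) (inl_bidual Psi_bid) _ (fst_dual phi_dual)) as E.
  assert (Hf : forall a a', phi (fst (xmul (amalg_inl a) (amalg_inl a'))) =
                            phi (ba_mul A a a')).
  { intros; rewrite amalg_mul_inl; reflexivity. }
  rewrite (arens_box_second_adjoint_congr xmul (ba_mul A) amalg_inl amalg_inl
      (fun a => a) (fun a => a) Phi Psi (fun x => phi (fst x)) phi Hf),
    (arens_diamond_second_adjoint_congr xmul (ba_mul A) amalg_inl amalg_inl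
      (fun a => a) (fun a => a) Phi Psi (fun x => phi (fst x)) phi Hf) in E.
  exact E.
Qed.

Lemma amalg_regular_ideal_regular : @amalg_arens_regular B I A theta -> ideal_arens_regular I.
Proof.
  intros H Phi Psi Phi_bid Psi_bid phi phi_dual.
  pose proof (H _ _ (inr_bidual Phi_bid) (inr_bidual Psi_bid) _ (snd_dual phi_dual)) as E.
  assert (Hf : forall i j, phi (snd (xmul (amalg_inr i) (amalg_inr j))) = phi (imul i j)).
  { intros; rewrite amalg_mul_inr; reflexivity. }
  rewrite (arens_box_second_adjoint_congr xmul imul amalg_inr amalg_inr
      (fun i => i) (fun i => i) Phi Psi (fun x => phi (snd x)) phi Hf),
    (arens_diamond_second_adjoint_congr xmul imul amalg_inr amalg_inr
      (fun i => i) (fun i => i) Phi Psi (fun x => phi (snd x)) phi Hf) in E.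
  exact E.
Qed.

Lemma amalg_regular_actions_regular : @amalg_arens_regular B I A theta -> regular_actions.
Proof.
  intros H Phi Gam Phi_bid Gam_bid F G. subst F G.
  split; intros g g_dual.
  - pose proof (H _ _ (inl_bidual Phi_bid) (inr_bidual Gam_bid) _
      (snd_dual (incl_dual g_dual))) as E; cbv beta in E.
    assert (Hf : forall a i, g (ideal_incl (snd (xmul (amalg_inl a) (amalg_inr i)))) =
                             g (ba_mul B (theta a) (ideal_incl i))).
    { intros; rewrite amalg_mul_inl_inr; reflexivity. }
    rewrite (arens_box_second_adjoint_congr xmul (ba_mul B) amalg_inl amalg_inr
        theta (@ideal_incl B I) Phi Gam (fun x => g (ideal_incl (snd x))) g Hf),
      (arens_diamond_second_adjoint_congr xmul (ba_mul B) amalg_inl amalg_inr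
        theta (@ideal_incl B I) Phi Gam (fun x => g (ideal_incl (snd x))) g Hf) in E.
    exact E.
  - pose proof (H _ _ (inr_bidual Gam_bid) (inl_bidual Phi_bid) _
      (snd_dual (incl_dual g_dual))) as E; cbv beta in E.
    assert (Hf : forall i a, g (ideal_incl (snd (xmul (amalg_inr i) (amalg_inl a)))) =
                             g (ba_mul B (ideal_incl i) (theta a))).
    { intros; rewrite amalg_mul_inr_inl; reflexivity. }
    rewrite (arens_box_second_adjoint_congr xmul (ba_mul B) amalg_inr amalg_inl
        (@ideal_incl B I) theta Gam Phi (fun x => g (ideal_incl (snd x))) g Hf),
      (arens_diamond_second_adjoint_congr xmul (ba_mul B) amalg_inr amalg_inl
        (@ideal_incl B I) theta Gam Phi (fun x => g (ideal_incl (snd x))) g Hf) in E.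
    exact E.
Qed.
End Amalgam.

Theorem corollary4p2 (A B : BanachAlg) (theta : A -> B) (I : closed_ideal B)
  (theta_add : forall x y, theta (ba_add A x y) = ba_add B (theta x) (theta y))
  (theta_scal : forall c x, theta (ba_scal A c x) = ba_scal B c (theta x))
  (theta_mul : forall x y, theta (ba_mul A x y) = ba_mul B (theta x) (theta y))
  (theta_contr : forall x, ba_norm B (theta x) <= ba_norm A x) :
  @amalg_arens_regular B I A theta <->
  (ba_arens_regular A /\
   ideal_arens_regular I /\
   (forall (Phi : (A -> R) -> R) (Gam : (ideal_car I -> R) -> R),
      is_bidual (@ba_add A) (@ba_scal A) (@ba_norm A) Phi ->
      is_bidual (@ideal_add B I) (@ideal_scal B I) (@ideal_norm B I) Gam ->
      let F := second_adjoint theta Phi in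
      let G := second_adjoint (@ideal_incl B I) Gam in
      bidual_eq (@ba_add B) (@ba_scal B) (@ba_norm B)
        (arens_box (@ba_mul B) F G) (arens_diamond (@ba_mul B) F G) /\
      bidual_eq (@ba_add B) (@ba_scal B) (@ba_norm B)
        (arens_box (@ba_mul B) G F) (arens_diamond (@ba_mul B) G F))).
Proof.
  split.
  - intros H. split; [|split].
    + exact (amalg_regular_base_regular H).
    + exact (amalg_regular_ideal_regular theta_scal H).
    + exact (amalg_regular_actions_regular theta_scal H).
  - intros [HA [HI Hact]].
    exact (amalg_regular_of_components theta_add theta_scal theta_contr HA HI Hact).
Qed.
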